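(* For $a\in\mathbb R\setminus\{0,1\}$, let $\mathfrak g_a$ be the $7$-dimensional nilpotent Lie algebra with basis $\{e_1,\dots,e_7\}$ and dual basis $\{e^i\}$ satisfying $$de^1=de^2=de^3=0,\ de^4=(a-1)e^{12},\ de^5=ae^{13},\ de^6=e^{23},\ de^7=e^{16}+e^{25}+e^{34}.$$ Then the set $\mathbf S$ of signatures of diagonal metrics satisfying $\operatorname{Ric}=-\frac12\mathrm{id}+\frac12N$ is: for $a<0$: $\{\emptyset,12357,12367,1237,126,125,1256,134,13456,1346,14567,1457,147,234,2345,23456,24567,2467,247,3567,357,367,5,6\}$; for $0<a<1$: $\{\emptyset,12347,1237,12357,12456,1256,126,13456,1346,136,1457,147,157,234,2345,235,24567,2467,267,34567,3567,367,4,5\}$; for $a>1$: $\{\emptyset,12347,12367,1237,12456,125,1256,134,1346,136,14567,1457,157,2345,23456,235,2467,247,267,34567,3567,357,4,6\}$.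
   Context: $d$ is the Chevalley–Eilenberg differential and $e^{ij}=e^i\wedge e^j$; the basis $\{e_i\}$ is a nice basis. The root matrix $M_\Delta$ has one row for each triple $(\{i,j\},k)$ with $[e_i,e_j]$ a nonzero multiple of $e_k$, with $+1$ in position $k$, $-1$ in positions $i,j$, $0$ elsewhere. $N$ is the diagonal Nikolayevsky derivation: the diagonal matrix with diagonal $M_\Delta^Tb+[1]$, where $b$ solves $M_\Delta M_\Delta^Tb=[1]$, $[1]$ the all-ones vector. A diagonal metric is $\sum_ig_ie^i\otimes e^i$, $g_i\neq0$, with Ricci operator $\operatorname{Ric}$. A signature is recorded as the string of indices $i$ with $g_i<0$; $\emptyset$ denotes positive definite. *)

From HB Require Import structures.
From mathcomp Require Import all_boot all_order all_algebra.
From mathcomp Require Import reals.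
Set Implicit Arguments. Unset Strict Implicit. Unset Printing Implicit Defensive.
Import Order.TTheory GRing.Theory Num.Theory.
Local Open Scope ring_scope.

(* A Lie algebra of dimension n with basis e_0..e_(n-1) is given by its
   structure constants:  [e_i, e_j] = \sum_k c i j k e_k.
   A diagonal metric is g = \sum_i g_i e^i (x) e^i, i.e. g(e_i,e_j) = delta_ij g_i. *)

Section Machinery.
Variables (R : realType) (n : nat).
Implicit Types (c : 'I_n -> 'I_n -> 'I_n -> R) (g : 'I_n -> R).

Definition diag_metric g : Prop := forall i, g i != 0.

(* Levi-Civita connection (Koszul formula for left-invariant fields):
   2 g(nabla_X Y, Z) = g([X,Y],Z) - g([Y,Z],X) + g([Z,X],Y);
   LC c g i j k = coefficient of e_k in nabla_{e_i} e_j. *)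
Definition LC c g (i j k : 'I_n) : R :=
  (g k * c i j k - g i * c j k i + g j * c k i j) / (2 * g k).

(* Curvature R(X,Y) = nabla_X nabla_Y - nabla_Y nabla_X - nabla_[X,Y];
   curv c g i j l p = coefficient of e_p in R(e_i,e_j) e_l. *)
Definition curv c g (i j l p : 'I_n) : R :=
  \sum_(m < n) (LC c g j l m * LC c g i m p - LC c g i l m * LC c g j m p
                - c i j m * LC c g m l p).

Definition ric c g (j l : 'I_n) : R := \sum_(i < n) curv c g i j l i.

(* Ricci operator: g(Ric Y, Z) = ric(Y,Z).  Matrix convention:
   (A i j) = coefficient of e_i in A e_j. *)
Definition Ric c g : 'M[R]_n := \matrix_(l, j) (ric c g j l / g l).

(* Root matrix: one row for each triple ({i,j},k) with [e_i,e_j] a nonzero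
   multiple of e_k (we list i < j), +1 in position k, -1 in positions i,j. *)
Definition root_triples c : seq ('I_n * 'I_n * 'I_n) :=
  filter (fun t : 'I_n * 'I_n * 'I_n =>
            (t.1.1 < t.1.2)%N && (c t.1.1 t.1.2 t.2 != 0))
         (enum [set: 'I_n * 'I_n * 'I_n]).

Definition root_matrix c : 'M[R]_(size (root_triples c), n) :=
  \matrix_(r, s) (let t := tnth (in_tuple (root_triples c)) r in
                  (s == t.2)%:R - (s == t.1.1)%:R - (s == t.1.2)%:R).

Definition is_Nikolayevsky c (N : 'M[R]_n) : Prop :=
  exists b : 'cV[R]_(size (root_triples c)),
    root_matrix c *m (root_matrix c)^T *m b = const_mx 1 /\
    N = diag_mx (((root_matrix c)^T *m b)^T + const_mx 1).

Definition signature g : {set 'I_n} := [set i | g i < 0].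

Definition in_S c (s : {set 'I_n}) : Prop :=
  exists g, diag_metric g /\ signature g = s /\
    exists N, is_Nikolayevsky c N /\
      Ric c g = (- 2^-1) *: 1%:M + 2^-1 *: N.

End Machinery.

(* Indices are 0-based: e_(i+1) of the paper is index i.
   dcoef a k i j (i < j) = coefficient of e^{ij} in de^k:
   de^4=(a-1)e^{12}, de^5=a e^{13}, de^6=e^{23}, de^7=e^{16}+e^{25}+e^{34}. *)
Definition dcoef (R : realType) (a : R) (k i j : 'I_7) : R :=
  match nat_of_ord k, nat_of_ord i, nat_of_ord j with
  | 3, 0, 1 => a - 1
  | 4, 0, 2 => a
  | 5, 1, 2 => 1
  | 6, 0, 5 => 1
  | 6, 1, 4 => 1
  | 6, 2, 3 => 1
  | _, _, _ => 0
  end.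

(* de^k(e_i, e_j), with e^{ij} = e^i /\ e^j, e^{ij}(e_i,e_j) = 1. *)
Definition dform (R : realType) (a : R) (k i j : 'I_7) : R :=
  if (i < j)%N then dcoef a k i j
  else if (j < i)%N then - dcoef a k j i else 0.

(* Chevalley-Eilenberg convention: de(X,Y) = - e([X,Y]),
   so the coefficient of e_k in [e_i,e_j] is - de^k(e_i,e_j). *)
Definition ga (R : realType) (a : R) (i j k : 'I_7) : R := - dform a k i j.

(* Signatures written as strings of 1-based indices. *)
Definition sg (s : seq nat) : {set 'I_7} := [set i : 'I_7 | (i.+1 \in s)].

Definition S_neg : seq {set 'I_7} := map sg
  [:: [::]; [::1;2;3;5;7]; [::1;2;3;6;7]; [::1;2;3;7]; [::1;2;6]; [::1;2;5];
      [::1;2;5;6]; [::1;3;4]; [::1;3;4;5;6]; [::1;3;4;6]; [::1;4;5;6;7];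
      [::1;4;5;7]; [::1;4;7]; [::2;3;4]; [::2;3;4;5]; [::2;3;4;5;6];
      [::2;4;5;6;7]; [::2;4;6;7]; [::2;4;7]; [::3;5;6;7]; [::3;5;7];
      [::3;6;7]; [::5]; [::6]].

Definition S_mid : seq {set 'I_7} := map sg
  [:: [::]; [::1;2;3;4;7]; [::1;2;3;7]; [::1;2;3;5;7]; [::1;2;4;5;6];
      [::1;2;5;6]; [::1;2;6]; [::1;3;4;5;6]; [::1;3;4;6]; [::1;3;6];
      [::1;4;5;7]; [::1;4;7]; [::1;5;7]; [::2;3;4]; [::2;3;4;5]; [::2;3;5];
      [::2;4;5;6;7]; [::2;4;6;7]; [::2;6;7]; [::3;4;5;6;7]; [::3;5;6;7];
      [::3;6;7]; [::4]; [::5]].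

Definition S_pos : seq {set 'I_7} := map sg
  [:: [::]; [::1;2;3;4;7]; [::1;2;3;6;7]; [::1;2;3;7]; [::1;2;4;5;6];
      [::1;2;5]; [::1;2;5;6]; [::1;3;4]; [::1;3;4;6]; [::1;3;6];
      [::1;4;5;6;7]; [::1;4;5;7]; [::1;5;7]; [::2;3;4;5]; [::2;3;4;5;6];
      [::2;3;5]; [::2;4;6;7]; [::2;4;7]; [::2;6;7]; [::3;4;5;6;7];
      [::3;5;6;7]; [::3;5;7]; [::4]; [::6]].

(* N is determined by M M^T b = [1] alone, because M M^T u = 0 forces M^T u = 0 (it is
   orthogonal to itself); here N = diag(1/2,1/2,1/2,1,1,1,3/2).  For a diagonal metric the
   Ricci operator of g_a is diagonal and depends only on the six quantities
   x_ijk = c^2 g_k / (g_i g_j) attached to the brackets [e_i, e_j] = c e_k.  The equation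
   Ric = -1/2 id + 1/2 N becomes x124 = x347, x135 = x257, x236 = x167 and
   x124 + x135 + x236 = 1/2.  As x124 x347 = (a-1)^2 x236 x167 and x135 x257 = a^2 x236 x167,
   this forces x124 = +-(a-1) x236 and x135 = +-a x236, which leaves exactly three solutions.
   The signs of g_1, g_2, g_3 are free and, together with the signs of the solution, they
   determine those of g_4, ..., g_7 (e.g. g_7 = g_1 g_2 g_3 x236^2); running through the
   8 x 3 cases gives the three lists of signatures. *)

From HB Require Import structures.
From mathcomp Require Import all_boot all_order all_algebra.
From mathcomp Require Import reals ring lra.
From mathcomp Require boolp.
Import Order.TTheory GRing.Theory Num.Theory.
Local Open Scope ring_scope.
Set Implicit Arguments. Unset Strict Implicit. Unset Printing Implicit Defensive.

Lemma mulmx_trmx_eq0 (R : realDomainType) m n (M : 'M[R]_(m, n)) (c : 'cV_m) :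
  M *m (M^T *m c) = 0 -> M^T *m c = 0.
Proof.
set u := M^T *m c => Mu0.
have : (u^T *m u) 0 0 = 0 by rewrite trmx_mul trmxK -mulmxA Mu0 mulmx0 mxE.
rewrite mxE => /eqP; rewrite psumr_eq0 => [/allP u0|i _]; last first.
  by rewrite mxE -expr2 sqr_ge0.
apply/matrixP => i j; rewrite ord1 [RHS]mxE.
have := u0 i (mem_index_enum _); rewrite [u^T 0 i]mxE -expr2 sqrf_eq0.
by move/eqP.
Qed.

Lemma is_NikolayevskyP (R : realType) n (c : 'I_n -> 'I_n -> 'I_n -> R) b w :
  (root_matrix c)^T *m b = w -> root_matrix c *m w = const_mx 1 ->
  forall N, is_Nikolayevsky c N <-> N = diag_mx (w^T + const_mx 1).
Proof.
move=> Mb Mw N; split=> [[b' [MMb' ->]]|->]; last first.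
  by exists b; rewrite -mulmxA Mb Mw.
suff -> : (root_matrix c)^T *m b' = w by [].
apply/eqP; rewrite -subr_eq0 -Mb -mulmxBr; apply/eqP/mulmx_trmx_eq0.
by rewrite mulmxA mulmxBr MMb' -mulmxA Mb Mw subrr.
Qed.

Section RootMatrixEntries.
Variables (R : realType) (n : nat) (c : 'I_n -> 'I_n -> 'I_n -> R).

Definition root_triple (r : 'I_(size (root_triples c))) := tnth (in_tuple (root_triples c)) r.

Lemma root_matrix_mulmx (v : 'cV[R]_n) r :
  (root_matrix c *m v) r 0 =
    v (root_triple r).2 0 - v (root_triple r).1.1 0 - v (root_triple r).1.2 0.
Proof.
rewrite mxE; under eq_bigr do rewrite mxE /= !mulrBl !mulr_natl !mulrb.
by rewrite !sumrB -!big_mkcond !big_pred1_eq.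
Qed.

Lemma trmx_root_matrix_mulmx (f : 'I_n * 'I_n * 'I_n -> R) s :
  ((root_matrix c)^T *m \col_r f (root_triple r)) s 0 =
    \sum_(t <- root_triples c) ((s == t.2)%:R - (s == t.1.1)%:R - (s == t.1.2)%:R) * f t.
Proof. by rewrite mxE [RHS]big_tnth; apply: eq_bigr => r _; rewrite !mxE. Qed.

End RootMatrixEntries.

Local Notation ord7 k := (@Ordinal 7 k isT).

Lemma ord7_ind (P : 'I_7 -> Prop) :
  P (ord7 0) -> P (ord7 1) -> P (ord7 2) -> P (ord7 3) -> P (ord7 4) -> P (ord7 5) ->
  P (ord7 6) -> forall i, P i.
Proof.
move=> P0 P1 P2 P3 P4 P5 P6 [[|[|[|[|[|[|[|//]]]]]]] i7];
  by rewrite (bool_irrelevance i7 isT).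
Qed.

Lemma big_ord7 (V : nmodType) (F : 'I_7 -> V) :
  \sum_(i < 7) F i =
    F (ord7 0) + F (ord7 1) + F (ord7 2) + F (ord7 3) + F (ord7 4) + F (ord7 5) + F (ord7 6).
Proof.
rewrite !big_ord_recl big_ord0 addr0 !addrA.
by congr (F _ + F _ + F _ + F _ + F _ + F _ + F _); apply: val_inj.
Qed.

Definition ga_triples : seq ('I_7 * 'I_7 * 'I_7) :=
  [:: (ord7 0, ord7 1, ord7 3); (ord7 0, ord7 2, ord7 4); (ord7 0, ord7 5, ord7 6);
      (ord7 1, ord7 2, ord7 5); (ord7 1, ord7 4, ord7 6); (ord7 2, ord7 3, ord7 6)].

(* [true] stands for a negative sign: [sign_pattern p t] lists the signs of g_1, ..., g_7
   when g_1, g_2, g_3 have signs [p] and x124, x135, x236 have signs [t]. *)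
Definition sign_pattern (p t : bool * bool * bool) : seq bool :=
  [:: p.1.1; p.1.2; p.2; p.1.1 (+) p.1.2 (+) t.1.1; p.1.1 (+) p.2 (+) t.1.2;
      p.1.2 (+) p.2 (+) t.2; p.1.1 (+) p.1.2 (+) p.2].

Definition pattern_set (bs : seq bool) : {set 'I_7} := [set i : 'I_7 | nth false bs i].

Definition bool3 : seq (bool * bool * bool) :=
  [:: (true, true, true); (true, true, false); (true, false, true); (true, false, false);
      (false, true, true); (false, true, false); (false, false, true); (false, false, false)].

Lemma mem_bool3 p : p \in bool3.
Proof. by case: p => [[[] []] []]. Qed.

Definition sign_patterns (T : seq (bool * bool * bool)) : seq (seq bool) :=
  [seq sign_pattern p t | t <- T, p <- bool3].

Definition sign3 {R : numDomainType} (x : R * R * R) : bool * bool * bool :=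
  (x.1.1 < 0, x.1.2 < 0, x.2 < 0).

Definition pattern_matches (bs : seq bool) (l : seq nat) : bool :=
  all (fun i => nth false bs i == (i.+1 \in l)) (iota 0 7).

Lemma pattern_set_sgE bs l : (pattern_set bs == sg l) = pattern_matches bs l.
Proof.
apply/eqP/allP => [E i | E].
  rewrite mem_iota add0n => i7.
  by have /setP/(_ (Ordinal i7)) := E; rewrite !inE => ->.
by apply/setP => i; rewrite !inE; apply/eqP/E; rewrite mem_iota ltn_ord.
Qed.

Definition signatures_agree (T : seq (bool * bool * bool)) (Ls : seq (seq nat)) : bool :=
  all (fun bs => has (pattern_matches bs) Ls) (sign_patterns T) &&
  all (fun l => has (pattern_matches^~ l) (sign_patterns T)) Ls.

Lemma signatures_agreeP T Ls :
  signatures_agree T Ls -> map pattern_set (sign_patterns T) =i map sg Ls.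
Proof.
case/andP=> /allP patterns_sg /allP sg_patterns s.
apply/mapP/mapP => [[bs bs_in ->] | [l l_in ->]].
  have /hasP[l l_in] := patterns_sg bs bs_in.
  by rewrite -pattern_set_sgE => /eqP E; exists l.
have /hasP[bs bs_in] := sg_patterns l l_in.
by rewrite -pattern_set_sgE => /eqP E; exists bs.
Qed.

Section Ga.
Variables (R : realType) (a : R).
Hypotheses (a_neq0 : a != 0) (a_neq1 : a != 1).
Implicit Type g : 'I_7 -> R.

Lemma root_triples_ga : perm_eq (root_triples (ga a)) ga_triples.
Proof.
apply: uniq_perm; [by rewrite filter_uniq ?enum_uniq | by [] |].
case=> [[i j] k]; rewrite mem_filter mem_enum in_setT andbT.
case: i => [[|[|[|[|[|[|[|i]]]]]]] ?] //; case: j => [[|[|[|[|[|[|[|j]]]]]]] ?] //;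
case: k => [[|[|[|[|[|[|[|k]]]]]]] ?] //=;
by rewrite /ga /dform /dcoef /= ?oppr0 ?eqxx ?oppr_eq0 ?oner_eq0 ?subr_eq0 ?a_neq0 ?a_neq1.
Qed.

(* [nik_b] puts 1/2 on the rows of [e_1, e_6] = e_7 and [e_2, e_3] = e_6, whence
   M^T nik_b = (e_7 - e_1 - e_2 - e_3) / 2 = [nik_w], and M nik_w = [1]. *)
Definition nik_b (t : 'I_7 * 'I_7 * 'I_7) : R :=
  if t \in [:: (ord7 0, ord7 5, ord7 6); (ord7 1, ord7 2, ord7 5)] then 2^-1 else 0.

Definition nik_w : 'cV[R]_7 :=
  \col_i (match val i with 0 | 1 | 2 => - 2^-1 | 6 => 2^-1 | _ => 0 end).

Lemma is_Nikolayevsky_ga N :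
  is_Nikolayevsky (ga a) N <-> N = diag_mx (nik_w^T + const_mx 1).
Proof.
apply: (is_NikolayevskyP (b := \col_r nik_b (root_triple r))).
  apply/matrixP => s j; rewrite ord1 trmx_root_matrix_mulmx.
  rewrite (perm_big _ root_triples_ga) !big_cons big_nil /nik_b !mxE.
  by case: s => [[|[|[|[|[|[|[|s]]]]]]] ?] //=; field.
apply/matrixP => r j; rewrite ord1 root_matrix_mulmx [RHS]mxE.
have rows_ga : all (fun t => nik_w t.2 0 - nik_w t.1.1 0 - nik_w t.1.2 0 == 1) ga_triples.
  by rewrite /= !mxE /= !andbT; repeat (apply/andP; split); apply/eqP; field.
by apply/eqP/(allP rows_ga); rewrite -(perm_mem root_triples_ga) mem_tnth.
Qed.

(* Paper indexing: [x_ijk] belongs to [e_i, e_j] = c e_k and is c^2 g_k / (g_i g_j),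
   while [g] is indexed from 0. *)
Definition x124 g := (a - 1) ^+ 2 * g (ord7 3) / (g (ord7 0) * g (ord7 1)).
Definition x135 g := a ^+ 2 * g (ord7 4) / (g (ord7 0) * g (ord7 2)).
Definition x236 g := g (ord7 5) / (g (ord7 1) * g (ord7 2)).
Definition x167 g := g (ord7 6) / (g (ord7 0) * g (ord7 5)).
Definition x257 g := g (ord7 6) / (g (ord7 1) * g (ord7 4)).
Definition x347 g := g (ord7 6) / (g (ord7 2) * g (ord7 3)).

Definition ricci_diag_ga g : 'rV[R]_7 := \row_i
  match val i with
  | 0 => - (x124 g + x135 g + x167 g) / 2
  | 1 => - (x124 g + x236 g + x257 g) / 2
  | 2 => - (x135 g + x236 g + x347 g) / 2
  | 3 => (x124 g - x347 g) / 2
  | 4 => (x135 g - x257 g) / 2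
  | 5 => (x236 g - x167 g) / 2
  | _ => (x167 g + x257 g + x347 g) / 2
  end.

(* [ga] with the tests [i < j] evaluated, so that it reduces under [cbv]. *)
Definition ga_table (i j k : nat) : R :=
  match i, j, k with
  | 0, 1, 3 => 1 - a | 1, 0, 3 => a - 1
  | 0, 2, 4 => - a | 2, 0, 4 => a
  | 1, 2, 5 | 0, 5, 6 | 1, 4, 6 | 2, 3, 6 => -1
  | 2, 1, 5 | 5, 0, 6 | 4, 1, 6 | 3, 2, 6 => 1
  | _, _, _ => 0
  end.

Lemma ga_tableE : ga a = fun i j k => ga_table i j k.
Proof.
apply: boolp.funext => i; apply: boolp.funext => j; apply: boolp.funext => k.
rewrite /ga /dform /dcoef /ga_table.
case: i => [[|[|[|[|[|[|[|i]]]]]]] ?] //; case: j => [[|[|[|[|[|[|[|j]]]]]]] ?] //;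
case: k => [[|[|[|[|[|[|[|k]]]]]]] ?] //=; by rewrite ?oppr0 ?opprB ?opprK.
Qed.

Lemma Ric_gaE g : diag_metric g -> Ric (ga a) g = diag_mx (ricci_diag_ga g).
Proof.
move=> g_neq0; apply/matrixP => i j; rewrite !mxE ga_tableE.
elim/ord7_ind: i; elim/ord7_ind: j;
  rewrite /ric big_ord7 /curv !big_ord7 [_ == _]/= ?mulr0n ?mulr1n;
  cbv beta iota zeta delta [LC ga_table nat_of_ord];
  rewrite /x124 /x135 /x236 /x167 /x257 /x347;
  by field; rewrite !g_neq0.
Qed.

Definition soliton_eqs (g : 'I_7 -> R) : Prop :=
  [/\ x124 g = x347 g, x135 g = x257 g, x236 g = x167 g
    & x124 g + x135 g + x236 g = 2^-1].

Lemma Ric_ga_solitonP g : diag_metric g ->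
  Ric (ga a) g = (- 2^-1) *: 1%:M + 2^-1 *: diag_mx (nik_w^T + const_mx 1) <->
  soliton_eqs g.
Proof.
move=> g_neq0; rewrite Ric_gaE //; split=> [/matrixP E | [E1 E2 E3 Esum]].
  have Ek k : ricci_diag_ga g 0 k = - 2^-1 + 2^-1 * (nik_w k 0 + 1).
    by have := E k k; rewrite !mxE eqxx !mulr1n mulr1.
  move: (Ek (ord7 0)) (Ek (ord7 1)) (Ek (ord7 2)) (Ek (ord7 3)) (Ek (ord7 4)) (Ek (ord7 5))
        (Ek (ord7 6)); rewrite !mxE /= => *.
  by split; lra.
apply/matrixP => i j; rewrite !mxE.
have [_|_] := eqVneq i j; last by rewrite !mulr0n !mulr0 addr0.
by rewrite !mulr1n mulr1; elim/ord7_ind: i => /=; lra.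
Qed.

Lemma in_S_ga_eqs s :
  in_S (ga a) s <-> exists g, [/\ diag_metric g, signature g = s & soliton_eqs g].
Proof.
split=> [[g [g_neq0 [<- [N [NN RicN]]]]] | [g [g_neq0 <- Eg]]].
  exists g; split=> //; apply/Ric_ga_solitonP => //.
  by rewrite -(is_Nikolayevsky_ga N).1.
exists g; do 2!split=> //; exists (diag_mx (nik_w^T + const_mx 1)).
by split; [exact/is_Nikolayevsky_ga | exact/Ric_ga_solitonP].
Qed.

Definition soliton_points : seq (R * R * R) :=
  [:: ((a - 1) / (4 * a), 4^-1, (4 * a)^-1);
      ((1 - a) / 4, a / 4, 4^-1);
      (4^-1, - a / (4 * (1 - a)), (4 * (1 - a))^-1)].

Lemma soliton_pointsP x1 x2 x3 :
  [/\ x1 ^+ 2 = (a - 1) ^+ 2 * x3 ^+ 2, x2 ^+ 2 = a ^+ 2 * x3 ^+ 2 & x1 + x2 + x3 = 2^-1] <->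
  (x1, x2, x3) \in soliton_points.
Proof.
have n4 : (4 : R) != 0 by rewrite pnatr_eq0.
have a1 : 1 - a != 0 by rewrite subr_eq0 eq_sym.
have a4 : 4 * a != 0 by rewrite mulf_neq0.
have a4' : 4 * (1 - a) != 0 by rewrite mulf_neq0.
rewrite !in_cons in_nil orbF; split; last first.
  by case/or3P => /eqP[-> -> ->]; split; field; rewrite ?a1.
rewrite -!exprMn => -[/eqP + /eqP]; rewrite !eqf_sqr => /orP[] /eqP-> /orP[] /eqP-> sum.
- have -> : x3 = (4 * a)^-1 by apply: (mulfI a4); rewrite mulfV //; lra.
  by apply/or3P/Or31/eqP; congr (_, _, _); field.
- lra.
- have -> : x3 = 4^-1 by apply: (mulfI n4); rewrite mulfV //; lra.
  by apply/or3P/Or32/eqP; congr (_, _, _); field.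
- have -> : x3 = (4 * (1 - a))^-1 by apply: (mulfI a4'); rewrite mulfV //; lra.
  by apply/or3P/Or33/eqP; congr (_, _, _); field; rewrite a1.
Qed.

Lemma soliton_points_neq0 x :
  x \in soliton_points -> [/\ x.1.1 != 0, x.1.2 != 0 & x.2 != 0].
Proof.
have a0 : (a == 0) = false by apply/negbTE.
have am1 : (a - 1 == 0) = false by rewrite subr_eq0; apply/negbTE.
have a1 : (1 - a == 0) = false by rewrite subr_eq0 eq_sym; apply/negbTE.
have n4 : (4 == 0 :> R) = false by rewrite pnatr_eq0.
rewrite !in_cons in_nil orbF => /or3P[] /eqP-> /=;
  by split; rewrite ?(mulf_eq0, invr_eq0, oppr_eq0, a0, am1, a1, n4).
Qed.

Lemma soliton_signs :
  map sign3 soliton_points =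
    [:: ((a - 1 < 0) (+) (a < 0), false, a < 0); (1 - a < 0, a < 0, false);
        (false, (0 < a) (+) (1 - a < 0), 1 - a < 0)].
Proof.
have quarter_sign (x y : R) : x != 0 -> y != 0 -> (x / (4 * y) < 0) = (x < 0) (+) (y < 0).
  move=> x0 y0; rewrite neq0_mulr_lt0 ?invr_neq0 ?mulf_neq0 ?pnatr_eq0 //.
  by rewrite invr_lt0 pmulr_rlt0 ?ltr0n.
have four_gt0 : (0 : R) < 4 by rewrite ltr0n.
have quarter_gt0 : (0 : R) < 4^-1 by rewrite invr_gt0.
have quarter_lt0 : (4^-1 < 0 :> R) = false by rewrite ltNge ltW.
have am1 : a - 1 != 0 by rewrite subr_eq0.
have a1 : 1 - a != 0 by rewrite subr_eq0 eq_sym.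
rewrite /= /sign3 /= !quarter_sign ?oppr_eq0 //.
by rewrite quarter_lt0 !invr_lt0 !(pmulr_rlt0 _ four_gt0) !(pmulr_llt0 _ quarter_gt0) oppr_lt0.
Qed.

Lemma soliton_signs_neg : a < 0 ->
  map sign3 soliton_points = [:: (false, false, true); (false, true, false); (false, false, false)].
Proof.
move=> a_lt0; have am1_lt0 : a - 1 < 0 by lra.
have a1_lt0 : (1 - a < 0) = false by apply/negbTE; rewrite -leNgt; lra.
by rewrite soliton_signs a_lt0 am1_lt0 a1_lt0 ltNge ltW.
Qed.

Lemma soliton_signs_mid : 0 < a < 1 ->
  map sign3 soliton_points = [:: (true, false, false); (false, false, false); (false, true, false)].
Proof.
case/andP=> a_gt0 a_lt1; have am1_lt0 : a - 1 < 0 by lra.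
have a1_lt0 : (1 - a < 0) = false by apply/negbTE; rewrite -leNgt; lra.
by rewrite soliton_signs a_gt0 am1_lt0 a1_lt0 ltNge ltW.
Qed.

Lemma soliton_signs_pos : 1 < a ->
  map sign3 soliton_points = [:: (false, false, false); (true, false, false); (false, false, true)].
Proof.
move=> a_gt1; have a_gt0 : 0 < a by lra.
have a1_lt0 : 1 - a < 0 by lra.
have am1_lt0 : (a - 1 < 0) = false by apply/negbTE; rewrite -leNgt; lra.
by rewrite soliton_signs a_gt0 am1_lt0 a1_lt0 ltNge ltW.
Qed.

Lemma signature_ga g : diag_metric g -> x236 g = x167 g ->
  signature g = pattern_set (sign_pattern (sign3 (g (ord7 0), g (ord7 1), g (ord7 2)))
                                          (sign3 (x124 g, x135 g, x236 g))).
Proof.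
move=> g_neq0 E3; have am1 : a - 1 != 0 by rewrite subr_eq0.
have g0 := g_neq0 (ord7 0); have g1 := g_neq0 (ord7 1); have g2 := g_neq0 (ord7 2).
have g3 := g_neq0 (ord7 3); have g4 := g_neq0 (ord7 4); have g5 := g_neq0 (ord7 5).
have sqr_gt0 (x : R) : x != 0 -> 0 < x ^+ 2 by move=> x0; rewrite exprn_even_gt0 ?x0 ?orbT.
have [x1 x2 x3] : [/\ x124 g != 0, x135 g != 0 & x236 g != 0].
  by split; rewrite ?(mulf_neq0, invr_neq0, expf_neq0).
apply/setP; elim/ord7_ind; rewrite !inE //=.
- have -> : g (ord7 3) = g (ord7 0) * g (ord7 1) * x124 g / (a - 1) ^+ 2.
    by rewrite /x124; field; rewrite am1 g0 g1.
  by rewrite pmulr_llt0 ?invr_gt0 ?sqr_gt0 // (neq0_mulr_lt0 (mulf_neq0 g0 g1) x1) neq0_mulr_lt0.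
- have -> : g (ord7 4) = g (ord7 0) * g (ord7 2) * x135 g / a ^+ 2.
    by rewrite /x135; field; rewrite a_neq0 g0 g2.
  by rewrite pmulr_llt0 ?invr_gt0 ?sqr_gt0 // (neq0_mulr_lt0 (mulf_neq0 g0 g2) x2) neq0_mulr_lt0.
- have -> : g (ord7 5) = g (ord7 1) * g (ord7 2) * x236 g.
    by rewrite /x236; field; rewrite g1 g2.
  by rewrite (neq0_mulr_lt0 (mulf_neq0 g1 g2) x3) neq0_mulr_lt0.
- have -> : g (ord7 6) = g (ord7 0) * g (ord7 1) * g (ord7 2) * x236 g ^+ 2.
    by rewrite expr2 {2}E3 /x236 /x167; field; rewrite g0 g1 g2 g5.
  by rewrite pmulr_llt0 ?sqr_gt0 // (neq0_mulr_lt0 (mulf_neq0 g0 g1) g2) neq0_mulr_lt0.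
Qed.

Definition sign_unit (b : bool) : R := if b then -1 else 1.

(* Solves x124 = x.1.1, x135 = x.1.2, x236 = x.2 for g_4, g_5, g_6 with g_i = +-1 for
   i <= 3; then x236 = x167 forces g_7. *)
Definition soliton_metric (p : bool * bool * bool) (x : R * R * R) (i : 'I_7) : R :=
  let e1 := sign_unit p.1.1 in let e2 := sign_unit p.1.2 in let e3 := sign_unit p.2 in
  match val i with
  | 0 => e1
  | 1 => e2
  | 2 => e3
  | 3 => x.1.1 * e1 * e2 / (a - 1) ^+ 2
  | 4 => x.1.2 * e1 * e3 / a ^+ 2
  | 5 => x.2 * e2 * e3
  | _ => x.2 ^+ 2 * e1 * e2 * e3
  end.

Lemma soliton_metric_spec p x : x \in soliton_points ->
  let g := soliton_metric p x in
  [/\ diag_metric g, soliton_eqs g, (x124 g, x135 g, x236 g) = x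
    & sign3 (g (ord7 0), g (ord7 1), g (ord7 2)) = p].
Proof.
move=> x_in; have [x1 x2 x3] := soliton_points_neq0 x_in.
case: x x_in x1 x2 x3 => [[y1 y2] y3] /soliton_pointsP[sq1 sq2 sum] /= y1_neq0 y2_neq0 y3_neq0.
have am1 : a - 1 != 0 by rewrite subr_eq0.
have e_neq0 b : sign_unit b != 0 by case: b; rewrite ?oppr_eq0 oner_eq0.
have e_lt0 b : (sign_unit b < 0) = b by case: b; rewrite ?ltrN10 ?ltr10.
have e1 := e_neq0 p.1.1; have e2 := e_neq0 p.1.2; have e3 := e_neq0 p.2.
set g := soliton_metric p (y1, y2, y3).
have E1 : x124 g = y1 by rewrite /x124 /g /soliton_metric /=; field; rewrite am1 e1 e2.
have E2 : x135 g = y2 by rewrite /x135 /g /soliton_metric /=; field; rewrite a_neq0 e1 e3.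
have E3 : x236 g = y3 by rewrite /x236 /g /soliton_metric /=; field; rewrite e2 e3.
have E4 : x167 g = y3 by rewrite /x167 /g /soliton_metric /= expr2; field; rewrite y3_neq0 e1 e2 e3.
have E5 : x257 g = y2.
  have -> : x257 g = a ^+ 2 * y3 ^+ 2 / y2.
    by rewrite /x257 /g /soliton_metric /=; field; rewrite a_neq0 y2_neq0 e1 e2 e3.
  by rewrite -sq2 expr2 mulfK.
have E6 : x347 g = y1.
  have -> : x347 g = (a - 1) ^+ 2 * y3 ^+ 2 / y1.
    by rewrite /x347 /g /soliton_metric /=; field; rewrite am1 y1_neq0 e1 e2 e3.
  by rewrite -sq1 expr2 mulfK.
split.
- by elim/ord7_ind; rewrite /g /soliton_metric /= ?(mulf_neq0, invr_neq0, expf_neq0).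
- by split; rewrite ?E1 ?E2 ?E3 ?E4 ?E5 ?E6.
- by rewrite E1 E2 E3.
- by rewrite /g /soliton_metric /sign3 /= !e_lt0; case: p {e1 e2 e3 g E1 E2 E3 E4 E5 E6} => [[]].
Qed.

Lemma in_S_ga_patterns s :
  in_S (ga a) s <-> s \in map pattern_set (sign_patterns (map sign3 soliton_points)).
Proof.
rewrite in_S_ga_eqs; split=> [[g [g_neq0 <- Eg]] | /mapP[_ /allpairsP[[t p] [t_in _ ->]] ->]].
  have [E1 E2 E3 Esum] := Eg.
  have x_in : (x124 g, x135 g, x236 g) \in soliton_points.
    apply/soliton_pointsP; split=> //; rewrite !expr2.
    + by rewrite {2}E1 {2}E3 /x124 /x347 /x236 /x167; field; rewrite !g_neq0.
    + by rewrite {2}E2 {2}E3 /x135 /x257 /x236 /x167; field; rewrite !g_neq0.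
  rewrite signature_ga //; apply: map_f; apply/allpairsP.
  exists (sign3 (x124 g, x135 g, x236 g), sign3 (g (ord7 0), g (ord7 1), g (ord7 2))).
  by split; [exact: (map_f sign3 x_in) | exact: mem_bool3 |].
case/mapP: t_in => x x_in ->.
have [g_neq0 Eg xE pE] := soliton_metric_spec p x_in.
exists (soliton_metric p x); split=> //.
by case: Eg => _ _ E3 _; rewrite signature_ga // xE pE.
Qed.

Lemma in_S_ga_signatures T Ls :
  map sign3 soliton_points = T -> signatures_agree T Ls ->
  forall s, in_S (ga a) s <-> s \in map sg Ls.
Proof. by move=> <- /signatures_agreeP agree s; rewrite in_S_ga_patterns agree. Qed.

End Ga.

Theorem lemma2p6 (R : realType) (a : R) (ha0 : a != 0) (ha1 : a != 1) :
  [/\ (a < 0 -> forall s : {set 'I_7}, in_S (ga a) s <-> s \in S_neg),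
      (0 < a < 1 -> forall s : {set 'I_7}, in_S (ga a) s <-> s \in S_mid)
    & (1 < a -> forall s : {set 'I_7}, in_S (ga a) s <-> s \in S_pos)].
Proof.
split=> [/(soliton_signs_neg ha0 ha1) | /(soliton_signs_mid ha0 ha1) | /(soliton_signs_pos ha0 ha1)]
  signs; apply: (in_S_ga_signatures ha0 ha1 signs); by vm_compute.
Qed.
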